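(* A quasivariety $\mathsf{K}$ has the weak ES property if and only if for every finitely generated $\mathbf{B}\in\mathsf{K}$ and every subalgebra $\mathbf{A}\leq\mathbf{B}$ that is full in $\mathsf{K}$, at least one of the following holds: (i) there are two distinct $\theta,\phi\in\mathrm{Con}_{\mathsf{K}}(\mathbf{B})$ with $\theta{\upharpoonright}_A=\phi{\upharpoonright}_A$; (ii) there are two distinct embeddings $g,h\colon\mathbf{B}\to\mathbf{C}$ with $\mathbf{C}\in\mathsf{K}_{\mathrm{RSI}}$ such that $g{\upharpoonright}_A=h{\upharpoonright}_A$. Moreover, whenever (i) holds one may take $\theta=\mathrm{id}_B$.
   Context: A quasivariety is a class of similar algebras closed under isomorphic copies, subalgebras, direct products and ultraproducts. A quasivariety $\mathsf{K}$ has the weak ES property if every $\mathsf{K}$-epimorphism (right-cancellable homomorphism with respect to homomorphisms into members of $\mathsf{K}$) between finitely generated members of $\mathsf{K}$ is surjective. For $\mathbf{A}\in\mathsf{K}$, a congruence $\theta$ of $\mathbf{A}$ is a $\mathsf{K}$-congruence if $\mathbf{A}/\theta\in\mathsf{K}$; $\mathrm{Con}_{\mathsf{K}}(\mathbf{A})$ is the set of these. For $\mathbf{A}\leq\mathbf{B}$ and a congruence $\theta$ of $\mathbf{B}$, $\theta{\upharpoonright}_A=\theta\cap(A\times A)$. $\mathbf{A}\leq\mathbf{B}$ is almost total if $B=\mathrm{Sg}^{\mathbf{B}}(A\cup\{b\})$ for some $b\in B$. $\mathbf{A}\leq\mathbf{B}$ (with $\mathbf{B}\in\mathsf{K}$)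 is full in $\mathsf{K}$ if it is proper, almost total, and for every $\theta\in\mathrm{Con}_{\mathsf{K}}(\mathbf{B})$ with $\theta\neq\mathrm{id}_B$ and every $b\in B$ there is $a\in A$ with $\langle a,b\rangle\in\theta$. An algebra $\mathbf{A}\in\mathsf{K}$ is subdirectly irreducible relative to $\mathsf{K}$ (RSI) if for every subdirect embedding $f\colon\mathbf{A}\to\prod_{i\in I}\mathbf{B}_i$ with all $\mathbf{B}_i\in\mathsf{K}$ some $p_i\circ f$ is an isomorphism (trivial algebras are not RSI); $\mathsf{K}_{\mathrm{RSI}}$ denotes the class of RSI members. *)

From mathcomp Require Import all_boot.
From Stdlib Require Import List.

Set Implicit Arguments.
Unset Strict Implicit.
Unset Printing Implicit Defensive.

Record signature := Signature { symb : Type; ar : symb -> nat }.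

Section UA.
Variable sg : signature.

Definition Ops (X : Type) := forall f : symb sg, ('I_(ar f) -> X) -> X.

Record algebra := Algebra {
  carrier :> Type;
  ops : Ops carrier;
  nonempty : inhabited carrier }.
Arguments ops : clear implicits.

Definition is_hom_ops (X Y : Type) (oX : Ops X) (oY : Ops Y) (h : X -> Y) :=
  forall f (x : 'I_(ar f) -> X), h (oX f x) = oY f (fun k => h (x k)).

Definition is_hom (A B : algebra) (h : A -> B) := is_hom_ops (ops A) (ops B) h.

Definition injective' (X Y : Type) (h : X -> Y) := forall x y, h x = h y -> x = y.
Definition surjective (X Y : Type) (h : X -> Y) := forall y, exists x, h x = y.

Definition is_embedding (A B : algebra) (h : A -> B) := is_hom h /\ injective' h.
Definition is_iso (A B : algebra) (h : A -> B) :=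
  is_hom h /\ injective' h /\ surjective h.

Definition prod_ops (I : Type) (A : I -> algebra) : Ops (forall i, A i) :=
  fun f x i => ops (A i) f (fun k => x k i).
Arguments prod_ops : clear implicits.

Definition ultrafilter (I : Type) (U : (I -> Prop) -> Prop) :=
  [/\ U (fun _ => True),
      ~ U (fun _ => False),
      (forall X Y : I -> Prop, U X -> (forall i, X i -> Y i) -> U Y),
      (forall X Y : I -> Prop, U X -> U Y -> U (fun i => X i /\ Y i)) &
      (forall X : I -> Prop, U X \/ U (fun i => ~ X i))].

(* Products and ultraproducts are taken
   "up to isomorphism": B is (isomorphic to) the product of the A_i when
   there is a bijective homomorphism from the product onto B; B is (isomorphic
   to) the ultraproduct of the A_i over U when there is a surjective
   homomorphism from the product onto B whose kernel is the U-equivalence. *)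
Definition quasivariety (K : algebra -> Prop) :=
  [/\ (forall (A B : algebra) (h : A -> B), is_iso h -> K A -> K B),
      (forall (A B : algebra) (h : A -> B), is_embedding h -> K B -> K A),
      (forall (I : Type) (A : I -> algebra) (B : algebra)
              (h : (forall i, A i) -> B),
         (forall i, K (A i)) -> is_hom_ops (prod_ops I A) (ops B) h ->
         injective' h -> surjective h -> K B) &
      (forall (I : Type) (A : I -> algebra) (U : (I -> Prop) -> Prop)
              (B : algebra) (h : (forall i, A i) -> B),
         (forall i, K (A i)) -> ultrafilter U ->
         is_hom_ops (prod_ops I A) (ops B) h -> surjective h ->
         (forall x y, h x = h y <-> U (fun i => x i = y i)) -> K B)].

Inductive Sg (A : algebra) (X : A -> Prop) : A -> Prop :=
| Sg_base x : X x -> Sg X x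
| Sg_op f (x : 'I_(ar f) -> A) : (forall k, Sg X (x k)) -> Sg X (ops A f x).

Definition fin_generated (A : algebra) :=
  exists l : list A, forall x, Sg (fun y => In y l) x.

Definition subuniverse (B : algebra) (S : B -> Prop) :=
  (exists a, S a) /\ forall f (x : 'I_(ar f) -> B), (forall k, S (x k)) -> S (ops B f x).

Definition K_epi (K : algebra -> Prop) (A B : algebra) (h : A -> B) :=
  is_hom h /\
  forall C : algebra, K C -> forall g1 g2 : B -> C, is_hom g1 -> is_hom g2 ->
    (forall a, g1 (h a) = g2 (h a)) -> forall b, g1 b = g2 b.

Definition weak_ES (K : algebra -> Prop) :=
  forall A B : algebra, K A -> K B -> fin_generated A -> fin_generated B ->
    forall h : A -> B, K_epi K h -> surjective h.

Definition is_congruence (B : algebra) (th : B -> B -> Prop) :=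
  [/\ (forall x, th x x), (forall x y, th x y -> th y x),
      (forall x y z, th x y -> th y z -> th x z) &
      (forall f (x y : 'I_(ar f) -> B), (forall k, th (x k) (y k)) ->
         th (ops B f x) (ops B f y))].

(* K-congruence: B/th is in K, i.e. th is the kernel of a surjective
   homomorphism onto a member of K (B/th up to isomorphism). *)
Definition K_congruence (K : algebra -> Prop) (B : algebra) (th : B -> B -> Prop) :=
  is_congruence th /\
  exists (C : algebra) (h : B -> C), K C /\ is_hom h /\ surjective h /\
    forall x y, th x y <-> h x = h y.

Definition rel_eq (X : Type) (r s : X -> X -> Prop) := forall x y, r x y <-> s x y.

Definition id_rel (X : Type) : X -> X -> Prop := fun x y => x = y.

Definition restr_eq (B : algebra) (S : B -> Prop) (r s : B -> B -> Prop) :=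
  forall a a', S a -> S a' -> (r a a' <-> s a a').

Definition full (K : algebra -> Prop) (B : algebra) (S : B -> Prop) :=
  [/\ K B, subuniverse S,
      (exists b, ~ S b),
      (exists b, forall x, Sg (fun y => S y \/ y = b) x) &
      (forall th, K_congruence K th -> ~ rel_eq th (@id_rel B) ->
         forall b, exists a, S a /\ th a b)].

Definition RSI (K : algebra -> Prop) (A : algebra) :=
  K A /\
  forall (I : Type) (B : I -> algebra) (f : A -> forall i, B i),
    (forall i, K (B i)) -> is_hom_ops (ops A) (prod_ops I B) f -> injective' f ->
    (forall i, surjective (fun a => f a i)) ->
    exists i, is_iso (fun a => f a i : B i).

End UA.

From mathcomp Require Import all_boot.
From mathcomp Require Import boolp.
From mathcomp Require classical_sets filter.
From Stdlib Require Import Classical ClassicalEpsilon.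

(** Forward direction: if A is full in a finitely generated B, weak ES says that
    no finitely generated subalgebra of A is K-epic in B; gluing the witnessing
    pairs of homomorphisms in an ultraproduct gives two homomorphisms B -> C in K
    that agree on A but not everywhere, and factoring C by a maximal K-congruence
    that keeps two of their values apart makes C relatively subdirectly
    irreducible.  If the two kernels differ we have (i); otherwise fullness forces
    the common kernel to be trivial, which gives the embeddings of (ii).

    Backward direction: a non-surjective K-epimorphism h : A -> B yields a
    subuniverse T containing h[A] and an element b with B = Sg(T + b), b not in T.
    Factoring B by a maximal K-congruence not collapsing b into T makes the image
    of T full, and both (i) (through a retraction onto the image of T) and (ii)
    produce two distinct homomorphisms agreeing on h[A], against epicity.

    For the last claim: if th /\ ph is not the identity, fullness makes every
    class of th /\ ph meet A, and then th = ph; hence one of th, ph is a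
    K-congruence other than the identity whose restriction to A is the identity. *)

Set Implicit Arguments.
Unset Strict Implicit.
Unset Printing Implicit Defensive.

Section Algebras.
Variable sg : signature.
Implicit Types A B C : algebra sg.

Definition op_closed B (S : B -> Prop) :=
  forall f (x : 'I_(ar f) -> B), (forall k, S (x k)) -> S (ops x).

Definition img A B (h : A -> B) (T : A -> Prop) : B -> Prop :=
  fun y => exists x, T x /\ h x = y.

Lemma hom_comp A B C (g : A -> B) (h : B -> C) :
  is_hom g -> is_hom h -> is_hom (fun x => h (g x)).
Proof. by move=> hg hh f x; rewrite hg hh. Qed.

Lemma img_op_closed A B (h : A -> B) (T : A -> Prop) :
  is_hom h -> op_closed T -> op_closed (img h T).
Proof.
move=> hh cT f y /choice [x Hx]; exists (ops x); split.
  by apply: cT => k; case: (Hx k).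
by rewrite hh; congr ops; apply: funext => k; case: (Hx k).
Qed.

Lemma Sg_mono B (X Y : B -> Prop) :
  (forall y, X y -> Y y) -> forall x, Sg X x -> Sg Y x.
Proof. by move=> XY x; elim=> [y /XY|f z _]; [apply: Sg_base|apply: Sg_op]. Qed.

Lemma Sg_min B (X T : B -> Prop) :
  op_closed T -> (forall y, X y -> T y) -> forall x, Sg X x -> T x.
Proof. by move=> cT XT x; elim=> [y /XT|f z _ /cT]. Qed.

Lemma Sg_img A B (h : A -> B) (X : A -> Prop) x :
  is_hom h -> Sg X x -> Sg (img h X) (h x).
Proof.
move=> hh; elim=> [y Xy|f z _ IH]; first by apply: Sg_base; exists y.
by rewrite hh; apply: Sg_op.
Qed.

Lemma hom_eq_Sg A B (g h : A -> B) (X : A -> Prop) :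
  is_hom g -> is_hom h -> (forall y, X y -> g y = h y) ->
  forall x, Sg X x -> g x = h x.
Proof.
move=> hg hh E x; elim=> [y /E //|f z _ IH].
by rewrite hg hh; congr ops; apply: funext.
Qed.

Lemma fin_generated_img A B (h : A -> B) :
  is_hom h -> surjective h -> fin_generated A -> fin_generated B.
Proof.
move=> hh sh [X genA]; exists (List.map h X) => y; have [x <-] := sh y.
apply: (Sg_mono _ (Sg_img hh (genA x))) => _ [z [Xz <-]].
exact: List.in_map.
Qed.

Section Subalgebra.
Variables (B : algebra sg) (S : B -> Prop).
Hypotheses (cS : op_closed S) (neS : exists a, S a).

Definition SubAlg : algebra sg :=
  @Algebra sg {x | S x}
    (fun f x => exist S (ops (fun k => sval (x k))) (cS (fun k => svalP (x k))))
    (let: ex_intro a Sa := neS in inhabits (exist S a Sa)).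

Lemma sval_embedding : is_embedding (fun x : SubAlg => sval x).
Proof. by split=> // [[x px] [y py]] /= exy; apply: eq_exist. Qed.

End Subalgebra.

Lemma list_lift (T : Type) (P : T -> Prop) (l : list T) :
  (forall y, List.In y l -> P y) -> exists l' : list {x | P x}, List.map sval l' = l.
Proof.
elim: l => [|a l IH] Pl; first by exists nil.
have [l' <-] := IH (fun y ly => Pl y (or_intror ly)).
by exists (exist _ a (Pl a (or_introl erefl)) :: l').
Qed.

Lemma fin_generated_Sg_list B (l : list B) ne :
  fin_generated (SubAlg (@Sg_op _ _ (fun y => List.In y l)) ne).
Proof.
set X := fun y => List.In y l.
have [l' Hl'] := @list_lift _ (Sg X) l (fun y ly => Sg_base ly).
exists l'; suff gen : forall z, Sg X z -> forall pz,
    Sg (A := SubAlg (@Sg_op _ _ X) ne) (fun y => List.In y l') (exist _ z pz).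
  by case=> z pz; apply: gen.
move=> z; elim=> [y Xy|f x Sx IH] pz.
  rewrite /X -Hl' in Xy; have [y' [ey' ly']] := proj1 (List.in_map_iff _ _ _) Xy.
  suff -> : exist _ y pz = y' by apply: Sg_base.
  by case: y' ey' {ly'} => y'' p /= e; apply: eq_exist.
have -> : exist _ (ops x) pz = ops (a := SubAlg (@Sg_op _ _ X) ne)
                                    (fun k => exist _ (x k) (Sx k)).
  exact: eq_exist.
by apply: Sg_op => k; apply: IH.
Qed.

Definition ProdAlg (I : Type) (A : I -> algebra sg) : algebra sg :=
  @Algebra sg (forall i, A i) (@prod_ops sg I A)
    (inhabits (fun i => epsilon (nonempty (A i)) (fun _ => True))).

Lemma tuple_hom B (I : Type) (A : I -> algebra sg) (h : forall i, B -> A i) :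
  (forall i, is_hom (h i)) -> is_hom (fun x : B => (fun i => h i x) : ProdAlg A).
Proof.
by move=> hh f x; apply: functional_extensionality_dep => i; rewrite hh.
Qed.

Lemma cong_saturation_closed B (ps : B -> B -> Prop) (S : B -> Prop) :
  is_congruence ps -> op_closed S -> op_closed (fun c => exists a, S a /\ ps a c).
Proof.
move=> [_ _ _ cps] cS f c /choice [a Ha]; exists (ops a); split.
  by apply: cS => k; case: (Ha k).
by apply: cps => k; case: (Ha k).
Qed.

Section Quotient.
Variables (B : algebra sg) (th : B -> B -> Prop).
Hypothesis th_cong : is_congruence th.

Definition quot_class (x : B) : {P | exists x, P = th x} := exist _ (th x) (ex_intro _ x erefl).

Definition quot_repr (c : {P | exists x, P = th x}) : B := sval (cid (svalP c)).

Lemma quot_classP x y : quot_class x = quot_class y <-> th x y.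
Proof.
have [r s t _] := th_cong; split=> [/(congr1 sval) /= -> //|xy].
apply: eq_exist; apply: funext => z; apply: propext.
by split=> [/(t _ _ _ (s _ _ xy))|/(t _ _ _ xy)].
Qed.

Lemma quot_classK c : quot_class (quot_repr c) = c.
Proof. by case: c => P HP; apply: eq_exist; rewrite /quot_repr; case: cid. Qed.

Definition QuotAlg : algebra sg :=
  @Algebra sg {P | exists x, P = th x}
    (fun f c => quot_class (ops (fun k => quot_repr (c k))))
    (let: inhabits x := nonempty B in inhabits (quot_class x)).

Lemma quotient_exists :
  exists (C : algebra sg) (q : B -> C),
    [/\ is_hom q, surjective q & forall x y, th x y <-> q x = q y].
Proof.
exists QuotAlg, quot_class; split=> [f x| c| x y]; last by rewrite quot_classP.
- apply/quot_classP; case: th_cong => _ s _ c; apply: c => k.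
  by apply/s/quot_classP; rewrite quot_classK.
- by exists (quot_repr c); apply: quot_classK.
Qed.

End Quotient.

(* Adjoin the generators in X one at a time while the subuniverse stays proper;
   the first one that makes it total is b. *)
Lemma almost_total_extension B (X : list B) (T : B -> Prop) :
  op_closed T -> (exists y, ~ T y) -> (forall x, Sg (fun y => T y \/ List.In y X) x) ->
  exists (T' : B -> Prop) (b : B), [/\ op_closed T', (forall y, T y -> T' y), ~ T' b &
    forall x, Sg (fun y => T' y \/ y = b) x].
Proof.
elim: X T => [|a X IH] T cT [y0 nTy0] genT.
  by case: nTy0; apply: (Sg_min cT _ (genT y0)) => y [|[]].
pose Ta := Sg (fun y => T y \/ y = a).
case: (classic (exists y, ~ Ta y)) => [nTa|Ta_total].
  have genTa x : Sg (fun y => Ta y \/ List.In y X) x.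
    apply: (Sg_mono _ (genT x)) => y [Ty|[<-|Xy]]; last by right.
      by left; apply: Sg_base; left.
    by left; apply: Sg_base; right.
  have [T' [b [cT' TaT' nT'b genT'b]]] := IH Ta (@Sg_op _ _ _) nTa genTa.
  by exists T', b; split=> // y Ty; apply: TaT'; apply: Sg_base; left.
exists T, a; split=> // [Ta'|x]; last by apply: NNPP => nx; apply: Ta_total; exists x.
apply: nTy0; have : Ta y0 by apply: NNPP => nTa; apply: Ta_total; exists y0.
by apply: (Sg_min cT) => y [|->].
Qed.

End Algebras.

Section Ultrafilters.
Variables (I : Type) (U : (I -> Prop) -> Prop).
Hypothesis uU : ultrafilter U.

Lemma ultra_mono (X Y : I -> Prop) : U X -> (forall i, X i -> Y i) -> U Y.
Proof. by case: uU => _ _ mono _ _; apply: mono. Qed.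

Lemma ultra_all (X : I -> Prop) : (forall i, X i) -> U X.
Proof. by case: uU => UT _ _ _ _ HX; apply: ultra_mono UT _ => i _. Qed.

Lemma ultra_and (X Y : I -> Prop) : U X -> U Y -> U (fun i => X i /\ Y i).
Proof. by case: uU => _ _ _ UI _; apply: UI. Qed.

Lemma ultra_nonempty (X : I -> Prop) : U X -> exists i, X i.
Proof.
move=> UX; apply: NNPP => nX; case: uU => _ U0 _ _ _; apply: U0.
by apply: ultra_mono UX _ => i Xi; apply: nX; exists i.
Qed.

Lemma ultra_forall_list (T : Type) (P : T -> I -> Prop) (l : list T) :
  (forall k, U (P k)) -> U (fun i => forall k, List.In k l -> P k i).
Proof.
move=> UP; elim: l => [|a l IH]; first by apply: ultra_all => i k [].
by apply: ultra_mono (ultra_and (UP a) IH) _ => i [Pa Pl] k /= [<-|/Pl].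
Qed.

Lemma List_In_mem (T : eqType) (x : T) (s : seq T) : x \in s -> List.In x s.
Proof. by elim: s => //= y s IH; rewrite inE => /orP [/eqP ->|/IH]; auto. Qed.

Lemma ultra_forall_ord n (P : 'I_n -> I -> Prop) :
  (forall k, U (P k)) -> U (fun i => forall k, P k i).
Proof.
move=> /(ultra_forall_list (enum 'I_n)) Ul; apply: ultra_mono Ul _ => i Pi k.
by apply: Pi; apply: List_In_mem; rewrite mem_enum.
Qed.

Lemma ultra_exists_list (T : Type) (P : T -> I -> Prop) (l : list T) :
  U (fun i => exists k, List.In k l /\ P k i) -> exists k, List.In k l /\ U (P k).
Proof.
elim: l => [|a l IH] /= Ul.
  by have [i [k [[] _]]] := ultra_nonempty Ul.
case: uU => _ _ _ _ /(_ (P a)) [Ua|Una]; first by exists a; auto.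
have [k [lk Uk]] : exists k, List.In k l /\ U (P k).
  apply: IH; apply: ultra_mono (ultra_and Ul Una) _.
  by move=> i [[k [[<-|lk] Pk]] nPa] //; exists k.
by exists k; auto.
Qed.

End Ultrafilters.

Lemma ultrafilter_directed (I : Type) (le : I -> I -> Prop) (i0 : I) :
  (forall i, le i i) -> (forall i j k, le i j -> le j k -> le i k) ->
  (forall i j, exists k, le i k /\ le j k) ->
  exists U, ultrafilter U /\ forall i, U (le i).
Proof.
move=> le_refl le_trans le_dir.
pose F (X : I -> Prop) := exists i, forall j, le i j -> X j.
have FF : filter.ProperFilter F.
  constructor; first by case=> i /(_ i (le_refl i)).
  constructor; first by exists i0.
  - move=> X Y [i Hi] [j Hj]; have [k [ik jk]] := le_dir i j.
    by exists k => l kl; split; [apply/Hi/(le_trans _ _ _ ik)|apply/Hj/(le_trans _ _ _ jk)].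
  - by move=> X Y XY [i Hi]; exists i => j /Hi /XY.
have [G [UG FG]] := filter.ultraFilterLemma FF.
exists G; split; last by move=> i; apply: FG; exists i.
split.
- exact: filter.filterT.
- by move/filter.filter_not_empty; apply; rewrite -[classical_sets.set0]/(fun _ => False).
- by move=> X Y GX XY; apply: filter.filterS GX.
- by move=> X Y; apply: filter.filterI.
- by move=> X; apply: filter.in_ultra_setVsetC.
Qed.

Lemma ultrafilter_finite_subsets (T : Type) (P : T -> Prop) :
  exists U : ({l : list T | forall y, List.In y l -> P y} -> Prop) -> Prop,
    ultrafilter U /\
    forall l : {l : list T | forall y, List.In y l -> P y},
      U (fun l' => forall y, List.In y (sval l) -> List.In y (sval l')).
Proof.
have i0 : {l : list T | forall y, List.In y l -> P y} by exists nil.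
apply: (ultrafilter_directed i0) => [l y //|l l' l'' ll' l'l'' y /ll' /l'l'' //|].
move=> [l Pl] [l' Pl'].
have Pll' y : List.In y (l ++ l') -> P y by move/List.in_app_iff => [/Pl|/Pl'].
by exists (exist _ _ Pll'); split=> y ly /=; apply/List.in_app_iff; auto.
Qed.

Section Quasivariety.
Variables (sg : signature) (K : algebra sg -> Prop).
Hypothesis QK : quasivariety K.
Implicit Types A B C D : algebra sg.

Definition separates B (S : B -> Prop) (b : B) (th : B -> B -> Prop) :=
  forall a, S a -> ~ th b a.

Lemma K_SubAlg B (S : B -> Prop) (cS : op_closed S) (neS : exists a, S a) :
  K B -> K (SubAlg cS neS).
Proof. by case: QK => _ Ksub _ _; apply: Ksub (sval_embedding cS neS). Qed.

Lemma K_ProdAlg (I : Type) (A : I -> algebra sg) :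
  (forall i, K (A i)) -> K (ProdAlg A).
Proof.
by case: QK => _ _ Kprod _ KA; apply: (Kprod I A (ProdAlg A) id KA) => // y; exists y.
Qed.

Lemma K_ultraproduct (I : Type) (A : I -> algebra sg) (U : (I -> Prop) -> Prop) :
  (forall i, K (A i)) -> ultrafilter U ->
  exists D (pi : ProdAlg A -> D),
    [/\ K D, is_hom pi, surjective pi & forall x y, pi x = pi y <-> U (fun i => x i = y i)].
Proof.
move=> KA uU.
have cong : is_congruence (fun x y : ProdAlg A => U (fun i => x i = y i)).
  split=> [x|x y|x y z Uxy Uyz|f x y /(ultra_forall_ord uU) Uxy].
  - exact: ultra_all.
  - by move=> Uxy; apply: (ultra_mono uU Uxy) => i ->.
  - by apply: (ultra_mono uU (ultra_and uU Uxy Uyz)) => i [-> ->].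
  - apply: (ultra_mono uU Uxy) => i xy.
    by rewrite /= /prod_ops; congr ops; apply: funext.
have [D [pi [hpi spi kpi]]] := quotient_exists cong.
exists D, pi; split=> // [|x y]; last by rewrite kpi.
by case: QK => _ _ _ Kultra; apply: Kultra KA uU hpi spi _ => x y; rewrite kpi.
Qed.

Lemma ultraproduct_glue B (I : Type) (C : I -> algebra sg) (U : (I -> Prop) -> Prop)
    (g h : forall i, B -> C i) :
  (forall i, K (C i)) -> ultrafilter U ->
  (forall i, is_hom (g i)) -> (forall i, is_hom (h i)) ->
  exists D (g' h' : B -> D),
    [/\ K D, is_hom g', is_hom h' & forall x y, g' x = h' y <-> U (fun i => g i x = h i y)].
Proof.
move=> KC uU hg hh; have [D [pi [KD hpi _ kpi]]] := K_ultraproduct KC uU.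
exists D, (fun x => pi (fun i => g i x)), (fun x => pi (fun i => h i x)).
by split=> //; apply: hom_comp hpi; apply: tuple_hom.
Qed.

Lemma K_congruence_ker B (th : B -> B -> Prop) :
  K_congruence K th -> exists C (q : B -> C),
    [/\ K C, is_hom q, surjective q & forall x y, th x y <-> q x = q y].
Proof. by move=> [_ [C [q [? [? [? ?]]]]]]; exists C, q. Qed.

Lemma K_congruence_ext B (th ph : B -> B -> Prop) :
  K_congruence K th -> rel_eq th ph -> K_congruence K ph.
Proof.
move=> [[r s t c] [C [q [KC [hq [sq kq]]]]]] e; split.
  split=> [x|x y /e /s /e|x y z /e xy /e yz|f x y xy] //; first exact/e.
  - by apply/e; apply: t xy yz.
  - by apply/e; apply: c => k; apply/e.
by exists C, q; do 3 split=> //; move=> x y; rewrite -e.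
Qed.

Lemma ker_K_congruence B C (g : B -> C) :
  K C -> is_hom g -> K_congruence K (fun x y => g x = g y).
Proof.
move=> KC hg; set T := img g (fun _ => True).
have cT : op_closed T := img_op_closed hg (fun _ _ _ => I).
have neT : exists c, T c by case: (nonempty B) => b; exists (g b), b.
split.
  split=> // [x y z -> -> //|f x y xy].
  by rewrite !hg; congr ops; apply: funext.
exists (SubAlg cT neT), (fun x => exist T (g x) (ex_intro _ x (conj I erefl))).
split; first exact: K_SubAlg.
split; first by move=> f x; apply: eq_exist; rewrite /= hg.
split; first by case=> c Tc; have [x [_ xc]] := Tc; exists x; apply: eq_exist.
by move=> x y; split=> [e|/(congr1 sval) //]; apply: eq_exist.
Qed.

Lemma id_K_congruence B : K B -> K_congruence K (@id_rel B).
Proof. by move=> KB; apply: (ker_K_congruence (g := id)). Qed.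

Lemma K_congruence_pullback B C (q : B -> C) (ps : C -> C -> Prop) :
  is_hom q -> K_congruence K ps -> K_congruence K (fun x y => ps (q x) (q y)).
Proof.
move=> hq /K_congruence_ker [D [p [KD hp _ kp]]].
apply: K_congruence_ext (ker_K_congruence KD (hom_comp hq hp)) _ => x y.
by rewrite kp.
Qed.

Lemma meet_K_congruence B (th ph : B -> B -> Prop) :
  K_congruence K th -> K_congruence K ph -> K_congruence K (fun x y => th x y /\ ph x y).
Proof.
move=> /K_congruence_ker [C1 [q1 [K1 hq1 _ k1]]] /K_congruence_ker [C2 [q2 [K2 hq2 _ k2]]].
pose C (b : bool) := if b then C1 else C2.
pose q (b : bool) : B -> C b := if b is true then q1 else q2.
have hq : forall b, is_hom (q b) by case.
have KC : forall b, K (C b) by case.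
apply: K_congruence_ext (ker_K_congruence (K_ProdAlg KC) (tuple_hom hq)) _ => x y.
rewrite k1 k2; split=> [e|[e1 e2]]; last by apply: functional_extensionality_dep; case.
by split; [apply: (congr1 (fun F => F true) e)|apply: (congr1 (fun F => F false) e)].
Qed.

(* The union is the kernel of the diagonal map into an ultraproduct of the
   quotients, over an ultrafilter containing every final segment of J. *)
Lemma directed_union_K_congruence B (J : Type) (Th : J -> B -> B -> Prop) (j0 : J) :
  (forall j, K_congruence K (Th j)) ->
  (forall j j', exists k,
     (forall x y, Th j x y -> Th k x y) /\ (forall x y, Th j' x y -> Th k x y)) ->
  K_congruence K (fun x y => exists j, Th j x y).
Proof.
move=> KTh dir; pose le j k := forall x y, Th j x y -> Th k x y.
have [U [uU Ule]] : exists U, ultrafilter U /\ forall j, U (le j).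
  by apply: (ultrafilter_directed j0) => // [j x y|i j k ij jk x y /ij /jk].
have /choice [Cq HCq] : forall j, exists Cq : {C : algebra sg & B -> C},
    [/\ K (projT1 Cq), is_hom (projT2 Cq) &
        forall x y, Th j x y <-> projT2 Cq x = projT2 Cq y].
  by move=> j; have [C [q [KC hq _ kq]]] := K_congruence_ker (KTh j); exists (existT _ C q).
have KC j : K (projT1 (Cq j)) by case: (HCq j).
have hq j : is_hom (projT2 (Cq j)) by case: (HCq j).
have kq j : forall x y, Th j x y <-> projT2 (Cq j) x = projT2 (Cq j) y by case: (HCq j).
have [D [g [g' [KD hg _ kg]]]] := ultraproduct_glue KC uU hq hq.
have gg' y : g y = g' y by apply/kg; apply: ultra_all.
apply: K_congruence_ext (ker_K_congruence KD hg) _ => x y; rewrite [g y]gg' kg.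
split=> [/(ultra_nonempty uU) [j /kq]|[j Hj]]; first by exists j.
by apply: (ultra_mono uU (Ule j)) => k /(_ x y Hj) /kq.
Qed.

Lemma max_separating_K_congruence B (S : B -> Prop) (b : B) :
  K B -> ~ S b ->
  exists th, [/\ K_congruence K th, separates S b th &
    forall ps, K_congruence K ps -> (forall x y, th x y -> ps x y) ->
      separates S b ps -> rel_eq ps th].
Proof.
move=> KB nSb.
pose T := {th : B -> B -> Prop | K_congruence K th /\ separates S b th}.
pose R (s t : T) := `[< forall x y, sval s x y -> sval t x y >].
have t0 : T.
  exists (@id_rel B); split; first exact: id_K_congruence.
  by move=> a Sa ba; apply: nSb; rewrite /id_rel in ba; rewrite ba.
have [[th [Kth sth]] maxth] : exists t, classical_sets.premaximal R t.
  apply: (classical_sets.ZL_preorder t0) => [t|r s t /asboolP rs /asboolP st|A Atot].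
  - by apply/asboolP.
  - by apply/asboolP => x y /rs /st.
  case: (classic (exists t, A t)) => [[t1 At1]|noA]; last first.
    by exists t0 => s As; case: noA; exists s.
  pose Th (j : {t | A t}) := sval (sval j).
  have dir j j' : exists k,
      (forall x y, Th j x y -> Th k x y) /\ (forall x y, Th j' x y -> Th k x y).
    have [/asboolP jj'|/asboolP j'j] := Atot _ _ (svalP j) (svalP j').
      by exists j'.
    by exists j.
  have Kun := directed_union_K_congruence (exist _ t1 At1)
                (fun j => proj1 (svalP (sval j))) dir.
  have sun : separates S b (fun x y => exists j, Th j x y).
    by move=> a Sa [j]; apply: (proj2 (svalP (sval j))).
  exists (exist _ (fun x y => exists j, Th j x y) (conj Kun sun) : T) => s As.
  by apply/asboolP => x y sxy; exists (exist _ s As).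
exists th; split=> // ps Kps thps sps x y; split=> [|/thps //].
by have /asboolP := maxth (exist _ ps (conj Kps sps)) (asboolT thps); apply.
Qed.

Lemma RSI_separating_quotient D (x0 y0 : D) :
  K D -> x0 <> y0 -> exists C (q : D -> C), [/\ RSI K C, is_hom q & q x0 <> q y0].
Proof.
move=> KD nxy.
have [th [Kth sth maxth]] := @max_separating_K_congruence D (fun a => a = y0) x0 KD nxy.
have [C [q [KC hq sq kq]]] := K_congruence_ker Kth.
have qxy : q x0 <> q y0 by move/kq; apply: sth.
exists C, q; split=> //; split=> // I Bs f KBs hf injf sf.
have [i fi] : exists i, f (q x0) i <> f (q y0) i.
  apply: NNPP => nf; apply: qxy; apply: injf; apply: functional_extensionality_dep => i.
  by apply: NNPP => ne; apply: nf; exists i.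
have hfi : is_hom (A := C) (B := Bs i) (fun c => f c i) by move=> g x; rewrite hf.
have ker : rel_eq (fun x y => f (q x) i = f (q y) i) th.
  by apply: maxth (ker_K_congruence (KBs i) (hom_comp hq hfi)) _ _ => [x y /kq -> //|a ->].
exists i; split=> //; split=> [c c'|]; last exact: sf.
by have [x <-] := sq c; have [y <-] := sq c'; move/ker/kq.
Qed.

Lemma congruence_rep_iff B (th : B -> B -> Prop) a a' x y :
  is_congruence th -> th a x -> th a' y -> (th x y <-> th a a').
Proof.
move=> [_ s t _] ax a'y; split=> [xy|aa'].
  by apply: t ax (t _ _ _ xy (s _ _ a'y)).
by apply: t (t _ _ _ (s _ _ ax) aa') a'y.
Qed.

Definition restr_not_injective B (S : B -> Prop) :=
  exists th ph : B -> B -> Prop,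
    [/\ K_congruence K th, K_congruence K ph, ~ rel_eq th ph & restr_eq S th ph].

Definition agreeing_RSI_embeddings B (S : B -> Prop) :=
  exists C (g h : B -> C),
    [/\ RSI K C, is_embedding g, is_embedding h, (exists b, g b <> h b) &
        (forall a, S a -> g a = h a)].

Lemma full_restr_eq_id B (S : B -> Prop) :
  full K S -> restr_not_injective S ->
  exists ph, [/\ K_congruence K ph, ~ rel_eq (@id_rel B) ph & restr_eq S (@id_rel B) ph].
Proof.
move=> [_ _ _ _ fullS] [th [ph [Kth Kph nthph rs]]].
case: (classic (rel_eq (fun x y => th x y /\ ph x y) (@id_rel B))) => [meet_id|]; last first.
  move=> /(fullS _ (meet_K_congruence Kth Kph)) fullmeet; case: nthph => x y.
  have [[a [Sa [tha pha]]] [a' [Sa' [tha' pha']]]] := (fullmeet x, fullmeet y).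
  rewrite (congruence_rep_iff Kth.1 tha tha') (congruence_rep_iff Kph.1 pha pha').
  exact: rs.
have [thS phS] : restr_eq S (@id_rel B) th /\ restr_eq S (@id_rel B) ph.
  by split=> a a' Sa Sa'; rewrite -meet_id; have := rs _ _ Sa Sa'; tauto.
case: (classic (rel_eq (@id_rel B) th)) => [thid|]; [exists ph|exists th]; split=> //.
by move=> phid; apply: nthph => x y; rewrite -thid phid.
Qed.

(* Every ph-class meets S, and in exactly one point since ph is the identity on S. *)
Lemma full_retraction B (S : B -> Prop) (ph : B -> B -> Prop) :
  full K S -> K_congruence K ph -> ~ rel_eq (@id_rel B) ph -> restr_eq S (@id_rel B) ph ->
  exists r : B -> B, [/\ is_hom r, forall a, S a -> r a = a & forall x, S (r x)].
Proof.
move=> [_ [_ cS] _ _ fullS] Kph nph phS.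
have [[rph sph tph cph] _] := Kph.
have [r Hr] := choice _ (fullS _ Kph (fun e => nph (fun x y => iff_sym (e x y)))).
have uniq a a' c : S a -> S a' -> ph a c -> ph a' c -> a = a'.
  by move=> Sa Sa' ac a'c; apply/(phS _ _ Sa Sa'); apply: tph ac (sph _ _ a'c).
exists r; split=> [f x|a Sa|x]; last by case: (Hr x).
  apply: (uniq _ _ (ops x)); first by case: (Hr (ops x)).
  - by apply: cS => k; case: (Hr (x k)).
  - by case: (Hr (ops x)).
  - by apply: cph => k; case: (Hr (x k)).
by apply: (uniq _ _ a) => //; case: (Hr a).
Qed.

Lemma full_separating_homs B (S : B -> Prop) :
  full K S -> restr_not_injective S \/ agreeing_RSI_embeddings S ->
  exists C (g h : B -> C),
    [/\ K C, is_hom g, is_hom h, (forall a, S a -> g a = h a) & exists x, g x <> h x].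
Proof.
move=> fS [/(full_restr_eq_id fS) [ph [Kph nph phS]]|].
  have [r [hr rS Sr]] := full_retraction fS Kph nph phS.
  have [KB _ [b nSb] _ _] := fS.
  exists B, r, id; split=> //; exists b => rb.
  by apply: nSb; rewrite -rb.
by move=> [C [g [h [[KC _] [hg _] [hh _] gh agree]]]]; exists C, g, h.
Qed.

Lemma weak_ES_finite_separation B (l : list B) (b : B) :
  weak_ES K -> K B -> fin_generated B -> (exists a, List.In a l) ->
  ~ Sg (fun y => List.In y l) b ->
  exists C (g h : B -> C),
    [/\ K C, is_hom g, is_hom h, (forall y, List.In y l -> g y = h y) & exists x, g x <> h x].
Proof.
move=> wES KB fgB [a la] nb.
have ne : exists y, Sg (fun y => List.In y l) y by exists a; apply: Sg_base.
set A := SubAlg (@Sg_op _ _ (fun y => List.In y l)) ne.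
have not_epi : ~ K_epi K (fun x : A => sval x).
  move=> epi; have [[y Sgy] /= yb] :=
    wES _ _ (K_SubAlg _ _ KB) KB (fin_generated_Sg_list ne) fgB _ epi b.
  by apply: nb; rewrite -yb.
apply: NNPP => nsep; apply: not_epi; split=> // C KC g h hg hh gh x.
apply: NNPP => gx; apply: nsep; exists C, g, h; split=> //; last by exists x.
by move=> y ly; apply: (gh (exist _ y (Sg_base ly))).
Qed.

(* The separating pairs for all finite subsets of S are glued in an ultraproduct;
   the glued pair still differs on one of the finitely many generators of B. *)
Lemma weak_ES_separating_homs B (S : B -> Prop) (a0 b0 : B) :
  weak_ES K -> K B -> fin_generated B -> op_closed S -> S a0 -> ~ S b0 ->
  exists C (g h : B -> C),
    [/\ K C, is_hom g, is_hom h, (forall a, S a -> g a = h a) & exists x, g x <> h x].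
Proof.
move=> wES KB fgB cS Sa0 nSb0.
pose I := {l : list B | forall y, List.In y l -> S y}.
have /(choice _) [Ch HCh] : forall l : I,
    exists Ch : {C : algebra sg & ((B -> C) * (B -> C))%type},
    [/\ K (projT1 Ch), is_hom (projT2 Ch).1, is_hom (projT2 Ch).2,
        (forall y, List.In y (a0 :: sval l) -> (projT2 Ch).1 y = (projT2 Ch).2 y) &
        exists x, (projT2 Ch).1 x <> (projT2 Ch).2 x].
  move=> [l Sl]; have Sgl : forall y, Sg (fun y => List.In y (a0 :: l)) y -> S y.
    by apply: Sg_min => // y [<-|/Sl].
  have [C [g [h [KC hg hh gh [x gx]]]]] := weak_ES_finite_separation (l := a0 :: l) wES KB fgB
    (ex_intro _ a0 (or_introl erefl)) (fun Sgb => nSb0 (Sgl _ Sgb)).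
  by exists (existT _ C (g, h)); split=> //; exists x.
have KC l : K (projT1 (Ch l)) by case: (HCh l).
have hg l : is_hom (projT2 (Ch l)).1 by case: (HCh l).
have hh l : is_hom (projT2 (Ch l)).2 by case: (HCh l).
have [U [uU Ule]] := ultrafilter_finite_subsets S.
have [D [g [h [KD hgD hhD kgh]]]] := ultraproduct_glue KC uU hg hh.
exists D, g, h; split=> // [a Sa|].
  have Sa_list : forall y, List.In y [:: a] -> S y by move=> y [<-|[]].
  apply/kgh; apply: (ultra_mono uU (Ule (exist _ _ Sa_list))) => l al.
  by case: (HCh l) => _ _ _ -> //; right; apply: al; left.
have [X genB] := fgB.
have diff : U (fun l => exists x, List.In x X /\ (projT2 (Ch l)).1 x <> (projT2 (Ch l)).2 x).
  apply: (ultra_all uU) => l; apply: NNPP => nd; case: (HCh l) => _ _ _ _ [x []].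
  apply: (hom_eq_Sg (hg l) (hh l) _ (genB x)) => y Xy.
  by apply: NNPP => ne; apply: nd; exists y.
have [x [_ Ux]] := ultra_exists_list uU diff.
exists x => /kgh Ue; have [l [ne e]] := ultra_nonempty uU (ultra_and uU Ux Ue).
exact: ne e.
Qed.

Lemma weak_ES_dichotomy B (S : B -> Prop) :
  weak_ES K -> fin_generated B -> full K S ->
  restr_not_injective S \/ agreeing_RSI_embeddings S.
Proof.
move=> wES fgB fS; case: (classic (restr_not_injective S)) => [|noI]; [by left|right].
have [KB [[a0 Sa0] cS] [b0 nSb0] _ fullS] := fS.
have [C [g [h [KC hg hh agree [x0 gh0]]]]] := weak_ES_separating_homs wES KB fgB cS Sa0 nSb0.
have [C' [q [RC hq qgh0]]] := RSI_separating_quotient KC gh0.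
have KC' : K C' by case: RC.
have [hqg hqh] := (hom_comp hg hq, hom_comp hh hq).
have ker_eq : rel_eq (fun x y => q (g x) = q (g y)) (fun x y => q (h x) = q (h y)).
  apply: NNPP => ne; apply: noI; do 2 eexists.
  split; [exact: ker_K_congruence hqg|exact: ker_K_congruence hqh|exact: ne|].
  by move=> a a' Sa Sa'; rewrite !agree.
have ker_id : rel_eq (fun x y => q (g x) = q (g y)) (@id_rel B).
  apply: NNPP => /(fullS _ (ker_K_congruence KC' hqg)) /(_ x0) [a [Sa ga]].
  by apply: qgh0; rewrite -ga (agree _ Sa); apply/ker_eq.
exists C', (fun x => q (g x)), (fun x => q (h x)); split=> //.
- by split=> // x y /ker_id.
- by split=> // x y /ker_eq /ker_id.
- by exists x0.
- by move=> a Sa; rewrite agree.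
Qed.

Section MaximalQuotient.
Variables (B C : algebra sg) (T : B -> Prop) (b : B) (th : B -> B -> Prop) (q : B -> C).
Hypotheses (cT : op_closed T) (neT : exists t, T t).
Hypothesis genTb : forall x, Sg (fun y => T y \/ y = b) x.
Hypothesis septh : separates T b th.
Hypothesis maxth : forall ps, K_congruence K ps -> (forall x y, th x y -> ps x y) ->
  separates T b ps -> rel_eq ps th.
Hypotheses (KC : K C) (hq : is_hom q) (sq : surjective q).
Hypothesis kq : forall x y, th x y <-> q x = q y.

Lemma max_quotient_collapse ps :
  K_congruence K ps -> ~ rel_eq ps (@id_rel C) -> exists t, T t /\ ps (q t) (q b).
Proof.
move=> Kps nps; have [[rps sps _ _] _] := Kps.
apply: NNPP => nt; apply: nps => c c'; have [x <-] := sq c; have [y <-] := sq c'.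
have pb : rel_eq (fun x y => ps (q x) (q y)) th.
  apply: maxth (K_congruence_pullback hq Kps) _ _ => [x' y' /kq -> //|t Tt bt].
  by apply: nt; exists t; split=> //; apply: sps.
by rewrite pb kq.
Qed.

Lemma max_quotient_full : full K (img q T).
Proof.
have nTqb : ~ img q T (q b) by move=> [t [Tt e]]; apply: (septh Tt); apply/kq; rewrite e.
have genC c : Sg (fun y => img q T y \/ y = q b) c.
  have [x <-] := sq c.
  by apply: (Sg_mono _ (Sg_img hq (genTb x))) => _ [y [[Ty|->] <-]]; [left; exists y|right].
have cqT := img_op_closed hq cT.
split=> //; [split=> //|by exists (q b)|by exists (q b)|].
  by case: neT => t Tt; exists (q t), t.
move=> ps Kps nps c; have [t [Tt psbt]] := max_quotient_collapse Kps nps.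
have [[rps _ _ _] _] := Kps.
apply: (Sg_min (cong_saturation_closed Kps.1 cqT) _ (genC c)) => y [Sy|->].
  by exists y.
by exists (q t); split=> //; exists t.
Qed.

End MaximalQuotient.

Lemma dichotomy_weak_ES :
  (forall B (S : B -> Prop), fin_generated B -> full K S ->
     restr_not_injective S \/ agreeing_RSI_embeddings S) -> weak_ES K.
Proof.
move=> dich A B _ KB _ [X genB] h [hh epi] y0; apply: NNPP => ny0.
set T0 := img h (fun _ => True).
have nT0 : exists y, ~ T0 y by exists y0 => [[x [_ e]]]; apply: ny0; exists x.
have genT0 x : Sg (fun y => T0 y \/ List.In y X) x by apply: (Sg_mono _ (genB x)) => y; right.
have [T [b [cT T0T nTb genTb]]] :=
  almost_total_extension (img_op_closed hh (fun _ _ _ => I)) nT0 genT0.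
have neT : exists t, T t by case: (nonempty A) => a; exists (h a); apply: T0T; exists a.
have [th [Kth septh maxth]] := max_separating_K_congruence KB nTb.
have [C [q [KC hq sq kq]]] := K_congruence_ker Kth.
have fullS := max_quotient_full cT neT genTb septh maxth KC hq sq kq.
have fgC := fin_generated_img hq sq (ex_intro _ X genB).
have [D [g1 [g2 [KD hg1 hg2 agree [c ne]]]]] := full_separating_homs fullS (dich _ _ fgC fullS).
apply: ne; have [x <-] := sq c.
apply: (epi D KD _ _ (hom_comp hq hg1) (hom_comp hq hg2)) => a.
by apply: agree; exists (h a); split=> //; apply: T0T; exists a.
Qed.

End Quasivariety.

Theorem mainTheorem2 (sg : signature) (K : algebra sg -> Prop) :
  quasivariety K ->
  (weak_ES K <->
    (forall (B : algebra sg) (S : B -> Prop),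
       fin_generated B -> full K S ->
       (exists th ph : B -> B -> Prop,
          [/\ K_congruence K th, K_congruence K ph, ~ rel_eq th ph &
              restr_eq S th ph])
       \/
       (exists (C : algebra sg) (g h : B -> C),
          [/\ RSI K C, is_embedding g, is_embedding h,
              (exists b, g b <> h b) &
              (forall a, S a -> g a = h a)])))
  /\
  (forall (B : algebra sg) (S : B -> Prop),
     fin_generated B -> full K S ->
     (exists th ph : B -> B -> Prop,
        [/\ K_congruence K th, K_congruence K ph, ~ rel_eq th ph &
            restr_eq S th ph]) ->
     exists ph : B -> B -> Prop,
       [/\ K_congruence K ph, ~ rel_eq (@id_rel B) ph &
           restr_eq S (@id_rel B) ph]).
Proof.
move=> QK; split; first split.
- by move=> wES B S fgB fS; apply: weak_ES_dichotomy.
- exact: dichotomy_weak_ES.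
- by move=> B S _ fS; apply: full_restr_eq_id.
Qed.
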